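(* Let $d\ge 1$, $T\ge 1$, let $\mathcal{X}\subseteq\mathbb{R}^d$ be a non-empty closed convex set containing $\mathbf{0}$, and let $0<\mu\le L$. Let $f_1,\dots,f_T:\mathcal{X}\to[0,\infty)$ be differentiable functions such that, for every $t$ and all $x,y\in\mathcal{X}$, $$\frac{\mu}{2}\|y-x\|^2\le f_t(y)-f_t(x)-\langle\nabla f_t(x),y-x\rangle\le\frac{L}{2}\|y-x\|^2 .$$ Assume that each minimizer $x_t^\star=\arg\min_{x\in\mathcal{X}}f_t(x)$ lies in the interior of $\mathcal{X}$. Let the starting point be $x_0=\mathbf{0}$, let $C_{\mathcal{A}_o}$ be the quadratic-switching cost of the OMGD algorithm with $K=\lceil\frac{L+\mu}{2\mu}\ln 4\rceil$, and let $C_{\mathsf{OPT}}$ be the optimal offline quadratic-switching cost. Then $$\frac{C_{\mathcal{A}_o}}{C_{\mathsf{OPT}}}\le 4(L+5)+\frac{16(L+5)}{\mu}.$$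
   Context: $\|\cdot\|$ is the Euclidean norm and $\Pi_{\mathcal{X}}(y)=\arg\min_{z\in\mathcal{X}}\|z-y\|$ is the Euclidean projection. For a sequence $(y_1,\dots,y_T)\in\mathcal{X}^T$ with $y_0=x_0$, its quadratic-switching cost is $\sum_{t=1}^T\big(f_t(y_t)+\frac12\|y_t-y_{t-1}\|^2\big)$. $C_{\mathsf{OPT}}$ is the minimum of this cost over all $(y_1,\dots,y_T)\in\mathcal{X}^T$ (with $y_0=x_0$). The OMGD (online multiple gradient descent) algorithm with parameter $K$ produces $x_1=x_0$ and, for $t=2,\dots,T$: set $z_t^{(0)}=x_{t-1}$, for $k=1,\dots,K$ set $z_t^{(k)}=\Pi_{\mathcal{X}}\big(z_t^{(k-1)}-\frac1L\nabla f_{t-1}(z_t^{(k-1)})\big)$, and set $x_t=z_t^{(K)}$. $C_{\mathcal{A}_o}$ is the quadratic-switching cost of $(x_1,\dots,x_T)$. *)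

From HB Require Import structures.
From mathcomp Require Import all_boot all_order all_algebra.
From mathcomp Require Import all_classical all_reals all_analysis.
Set Implicit Arguments. Unset Strict Implicit. Unset Printing Implicit Defensive.
Import Order.TTheory GRing.Theory Num.Theory.
Import numFieldNormedType.Exports.
Local Open Scope classical_set_scope.
Local Open Scope ring_scope.

Section Defs.
Variables (R : realType) (d : nat).
Notation vec := 'rV[R]_d.

Definition dotp (u v : vec) : R := \sum_(i < d) u 0 i * v 0 i.
Definition sqnorm (u : vec) : R := dotp u u.
Definition enorm (u : vec) : R := Num.sqrt (sqnorm u).

Definition convex_set_of (X : set vec) : Prop :=
  forall x y, X x -> X y -> forall l : R, 0 <= l <= 1 ->
    X (l *: x + (1 - l) *: y).

Definition grad (f : vec -> R) (x : vec) : vec :=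
  \row_(i < d) ('d f x : vec -> R) (delta_mx 0 i).

(* Euclidean projection onto X: an argmin of ||z - y|| over z in X
   (unique for X nonempty closed convex). *)
Definition proj (X : set vec) (y : vec) : vec :=
  xget 0 [set z | X z /\ forall w, X w -> enorm (z - y) <= enorm (w - y)].

(* Quadratic-switching cost of y_1..y_T with y_0 := x0. *)
Definition qs_cost (f : nat -> vec -> R) (T : nat) (x0 : vec) (y : nat -> vec) : R :=
  \sum_(1 <= t < T.+1)
     (f t (y t) + 2^-1 * enorm (y t - (if t is t'.+1 then (if t' is 0 then x0 else y t') else x0)) ^+ 2).

Definition C_OPT (X : set vec) (f : nat -> vec -> R) (T : nat) (x0 : vec) : R :=
  inf [set c | exists y : nat -> vec,
                 (forall t, (1 <= t <= T)%N -> X (y t)) /\ c = qs_cost f T x0 y].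

Definition omgd_step (X : set vec) (f : nat -> vec -> R) (L : R) (s : nat) (z : vec) : vec :=
  proj X (z - L^-1 *: grad (f s) z).

(* OMGD iterates: x_1 = x0, x_t = (K inner steps on f_{t-1}) starting at x_{t-1}.
   (index 0 also returns x0.) *)
Fixpoint omgd (X : set vec) (f : nat -> vec -> R) (L : R) (K : nat) (x0 : vec) (t : nat) : vec :=
  match t with
  | 0 => x0
  | n.+1 => if n is 0 then x0 else iter K (omgd_step X f L n) (omgd X f L K x0 n)
  end.

Definition C_OMGD (X : set vec) (f : nat -> vec -> R) (L : R) (K T : nat) (x0 : vec) : R :=
  qs_cost f T x0 (omgd X f L K x0).

End Defs.

From Pilot Require Import Defs.
From HB Require Import structures.
From mathcomp Require Import all_boot all_order all_algebra.
From mathcomp Require Import all_classical all_reals all_analysis.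
From mathcomp Require Import ring lra.
Set Implicit Arguments. Unset Strict Implicit. Unset Printing Implicit Defensive.
Import Order.TTheory GRing.Theory Num.Theory.
Import numFieldNormedType.Exports.
Local Open Scope classical_set_scope.
Local Open Scope ring_scope.

(* Let x*_t minimize f_t over X.  As x*_t is interior, grad f_t (x*_t) = 0, so
   f_t(x*_t) + mu/2 |w - x*_t|^2 <= f_t(w) <= f_t(x*_t) + L/2 |w - x*_t|^2.
   A projected gradient step contracts the squared distance to x*_t by
   (L - mu)/(L + mu), so the K steps of a round contract it by 1/4.  Hence the
   tracking errors E_t = |x_t - x*_t|^2 satisfy E_t <= E_{t-1}/2 + 2 P_t with
   P_t = |x*_t - x*_{t-1}|^2, and OMGD costs at most
   sum_t f_t(x*_t) + (2L + 9/2) sum_t P_t.  Conversely, for any comparator y,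
   sum_t P_t is bounded by the distances |y_t - x*_t|^2, which the hitting cost
   of y pays for at rate mu/2 beyond sum_t f_t(x*_t), and by the switching cost
   of y. *)

Section Euclidean.
Variables (R : realType) (d : nat).
Local Notation vec := 'rV[R]_d.

Lemma dotpC (u v : vec) : dotp u v = dotp v u.
Proof. by apply: eq_bigr => i _; rewrite mulrC. Qed.

Lemma dotpDl (u v w : vec) : dotp (u + v) w = dotp u w + dotp v w.
Proof. by rewrite /dotp -big_split; apply: eq_bigr => i _; rewrite mxE mulrDl. Qed.

Lemma dotpZl a (u w : vec) : dotp (a *: u) w = a * dotp u w.
Proof. by rewrite /dotp mulr_sumr; apply: eq_bigr => i _; rewrite mxE mulrA. Qed.

Lemma dotpNl (u w : vec) : dotp (- u) w = - dotp u w.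
Proof. by rewrite -scaleN1r dotpZl mulN1r. Qed.

Lemma dotpBl (u v w : vec) : dotp (u - v) w = dotp u w - dotp v w.
Proof. by rewrite dotpDl dotpNl. Qed.

Lemma dotpDr (u v w : vec) : dotp w (u + v) = dotp w u + dotp w v.
Proof. by rewrite dotpC dotpDl !(dotpC w). Qed.

Lemma dotpZr a (u w : vec) : dotp w (a *: u) = a * dotp w u.
Proof. by rewrite dotpC dotpZl dotpC. Qed.

Lemma dotpNr (u w : vec) : dotp w (- u) = - dotp w u.
Proof. by rewrite dotpC dotpNl dotpC. Qed.

Lemma dotpBr (u v w : vec) : dotp w (u - v) = dotp w u - dotp w v.
Proof. by rewrite dotpDr dotpNr. Qed.

Lemma sqnorm_ge0 (u : vec) : 0 <= sqnorm u.
Proof. by apply: sumr_ge0 => i _; rewrite -expr2 sqr_ge0. Qed.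

Lemma sqnormD (u v : vec) : sqnorm (u + v) = sqnorm u + 2 * dotp u v + sqnorm v.
Proof. rewrite /sqnorm dotpDl !dotpDr (dotpC v u); ring. Qed.

Lemma sqnormB (u v : vec) : sqnorm (u - v) = sqnorm u - 2 * dotp u v + sqnorm v.
Proof. rewrite /sqnorm dotpBl !dotpBr (dotpC v u); ring. Qed.

Lemma sqnormZ a (u : vec) : sqnorm (a *: u) = a ^+ 2 * sqnorm u.
Proof. rewrite /sqnorm dotpZl dotpZr; ring. Qed.

Lemma sqnormN (u : vec) : sqnorm (- u) = sqnorm u.
Proof. by rewrite /sqnorm dotpNl dotpNr opprK. Qed.

Lemma sqnorm0 : sqnorm (0 : vec) = 0.
Proof. by rewrite -(scale0r (0 : vec)) sqnormZ expr0n mul0r. Qed.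

Lemma sqnormBC (u v : vec) : sqnorm (u - v) = sqnorm (v - u).
Proof. by rewrite -sqnormN opprB. Qed.

Lemma enorm_sq (u : vec) : enorm u ^+ 2 = sqnorm u.
Proof. by rewrite /enorm sqr_sqrtr // sqnorm_ge0. Qed.

Lemma dotp_young c (u v : vec) : 0 < c ->
  2 * dotp u v <= c * sqnorm u + c^-1 * sqnorm v.
Proof.
move=> c_gt0; have := sqnorm_ge0 (c *: u - v).
rewrite sqnormB sqnormZ dotpZl => h.
rewrite -subr_ge0 -(pmulr_rge0 _ c_gt0).
suff -> : c * (c * sqnorm u + c^-1 * sqnorm v - 2 * dotp u v) =
          c ^+ 2 * sqnorm u - 2 * (c * dotp u v) + sqnorm v by [].
by field; rewrite gt_eqF.
Qed.

Lemma sqnormD_le c (u v : vec) : 0 < c ->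
  sqnorm (u + v) <= (1 + c) * sqnorm u + (1 + c^-1) * sqnorm v.
Proof. by move=> c_gt0; have := dotp_young u v c_gt0; rewrite sqnormD; lra. Qed.

Lemma sqnormD_le2 (u v : vec) : sqnorm (u + v) <= 2 * sqnorm u + 2 * sqnorm v.
Proof. by have := sqnormD_le u v (@ltr01 R); rewrite invr1; lra. Qed.

Lemma dotp_ge_young c (g u : vec) : 0 < c ->
  - (c^-1 * sqnorm g) - c / 4 * sqnorm u <= dotp g u.
Proof.
move=> c_gt0; have := dotp_young (- g) u (divr_gt0 (ltr0Sn R 1) c_gt0).
rewrite dotpNl sqnormN invf_div.
have -> : 2 / c * sqnorm g = 2 * (c^-1 * sqnorm g) by rewrite mulrA.
have -> : c / 2 * sqnorm u = 2 * (c / 4 * sqnorm u) by field.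
lra.
Qed.

Lemma sqnorm_detour_le c (a b p q : vec) : 0 < c ->
  sqnorm (b - a) <=
    2 * (1 + c) * (sqnorm (q - b) + sqnorm (p - a)) + (1 + c^-1) * sqnorm (q - p).
Proof.
move=> c_gt0.
have -> : b - a = ((b - q) + (p - a)) + (q - p) by apply/rowP => i; rewrite !mxE; ring.
apply: le_trans (sqnormD_le _ _ c_gt0) _.
rewrite lerD2r [2 * _]mulrC -mulrA ler_pM2l; last by rewrite addr_gt0.
by rewrite mulrDr (sqnormBC q b); exact: sqnormD_le2.
Qed.

End Euclidean.

Lemma ge0_of_perturb (R : realFieldType) (a b e : R) : 0 < e ->
  (forall l, 0 < l -> l < e -> 0 <= a + l * b) -> 0 <= a.
Proof.
move=> e_gt0 h; rewrite leNgt; apply/negP => a_lt0.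
have [b_le0|b_gt0] := leP b 0.
  have e2_gt0 : 0 < e / 2 by lra.
  have e2_lt : e / 2 < e by lra.
  by have := h _ e2_gt0 e2_lt; nra.
set l := Num.min (e / 2) (- a / (2 * b)).
have l_gt0 : 0 < l by rewrite lt_min; apply/andP; split; [lra | apply: divr_gt0; lra].
have l_lt : l < e by rewrite gt_min; apply/orP; left; lra.
have lb : l * b <= - a / 2.
  have : l <= - a / (2 * b) by rewrite ge_min lexx orbT.
  rewrite -(ler_pM2r b_gt0) => /le_trans; apply.
  have -> : - a / (2 * b) * b = - a / 2 by field; rewrite gt_eqF.
  exact: lexx.
by have := h l l_gt0 l_lt; lra.
Qed.

Lemma sum_shift_le (R : numDomainType) (E : nat -> R) n :
  E 0%N = 0 -> (forall t, 0 <= E t) ->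
  \sum_(1 <= t < n.+1) E t.-1 <= \sum_(1 <= t < n.+1) E t.
Proof.
move=> E0 E_ge0.
have shift : \sum_(1 <= t < n.+1) E t.-1 + E n = E 0%N + \sum_(1 <= t < n.+1) E t.
  elim: n => [|n IH]; first by rewrite !big_geq // add0r addr0.
  rewrite (@big_nat_recr _ _ _ n.+1 1 (fun t => E t.-1)) //.
  by rewrite (@big_nat_recr _ _ _ n.+1 1 E) //= IH addrA.
by move: shift; rewrite E0 add0r => <-; rewrite lerDl.
Qed.

(* (1 - c)^K <= exp(-cK) with c = 2 mu / (L + mu) and cK >= ln 4. *)
Lemma contraction_pow_le_quarter (R : realType) (mu L : R) (K : nat) :
  0 < mu -> mu <= L ->
  (K%:R : R) = (Num.ceil ((L + mu) / (2 * mu) * ln 4))%:~R ->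
  ((L - mu) / (L + mu)) ^+ K <= 4^-1.
Proof.
move=> mu_gt0 mu_le_L K_ceil.
have Lmu_gt0 : 0 < L + mu by rewrite addr_gt0 // (lt_le_trans mu_gt0).
set c := 2 * mu / (L + mu).
have c_gt0 : 0 < c by rewrite divr_gt0 // mulr_gt0.
have q_ge0 : 0 <= (L - mu) / (L + mu) by rewrite divr_ge0 ?subr_ge0 // ltW.
have q_le : ((L - mu) / (L + mu)) ^+ K <= expR (- c) ^+ K.
  apply: lerXn2r; rewrite ?nnegrE ?expR_ge0 //.
  have -> : (L - mu) / (L + mu) = 1 + - c by rewrite /c; field; rewrite gt_eqF.
  exact: expR_ge1Dx.
apply: (le_trans q_le); rewrite -expRM_natr.
have -> : (4 : R)^-1 = expR (- ln 4) by rewrite expRN lnK // posrE.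
rewrite ler_expR mulNr lerN2.
have -> : ln 4 = c * ((L + mu) / (2 * mu) * ln 4).
  by rewrite /c; field; rewrite !gt_eqF // mulr_gt0.
by rewrite ler_pM2l // K_ceil ceil_ge.
Qed.

Section Minimizers.
Variables (R : realType) (d : nat).
Local Notation vec := 'rV[R]_d.

Definition argmin_on (X : set vec) (phi : vec -> R) : set vec :=
  [set z | X z /\ forall w, X w -> phi z <= phi w].

Lemma mx_norm_le_sqrt_sqnorm (u : vec) : `|u| <= Num.sqrt (sqnorm u).
Proof.
rewrite [leLHS]/Num.norm /= mx_normrE; apply: bigmax_le => //= -[i j] _ /=.
rewrite (ord1 i) -sqrtr_sqr ler_sqrt ?sqnorm_ge0 // /sqnorm /dotp (bigD1 j) //=.
by rewrite -expr2 lerDl; apply: sumr_ge0 => k _; rewrite -expr2 sqr_ge0.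
Qed.

Lemma continuous_sum (T : topologicalType) (I : Type) (r : seq I) (F : I -> T -> R) :
  (forall i, continuous (F i)) -> continuous (fun x => \sum_(i <- r) F i x).
Proof.
move=> F_cont; elim: r => [|i r IH].
  rewrite (_ : (fun x => _) = fun=> 0); first exact: cst_continuous.
  by apply: funext => x; rewrite big_nil.
rewrite (_ : (fun x => _) = F i + (fun x => \sum_(j <- r) F j x)).
  by move=> x; apply: continuousD; [exact: F_cont | exact: IH].
by apply: funext => x; rewrite big_cons.
Qed.

Lemma continuous_sqnormB (y : vec) : continuous (fun w : vec => sqnorm (w - y)).
Proof.
apply: continuous_sum => i x.
have coord_cont : {for x, continuous (fun w : vec => (w - y) 0 i)}.
  rewrite (_ : (fun w : vec => _) = (fun w : vec => w 0 i) - (fun=> y 0 i)).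
    by apply: continuousB; [exact: coord_continuous | exact: cst_continuous].
  by apply: funext => w; rewrite !mxE.
exact: continuousM.
Qed.

(* Outside the ball of radius |x0| + sqrt (a / b) around 0, phi exceeds phi x0,
   so it suffices to minimize over the compact part of X inside that ball. *)
Lemma coercive_argmin_exists (X : set vec) (phi : vec -> R) (x0 : vec) (a b : R) :
  closed X -> X x0 -> (forall x, X x -> {for x, continuous phi}) ->
  0 < b -> 0 <= a ->
  (forall w, X w -> phi x0 - a + b * sqnorm (w - x0) <= phi w) ->
  exists z, argmin_on X phi z.
Proof.
move=> X_closed Xx0 phi_cont b_gt0 a_ge0 coercive.
set M := `|x0| + Num.sqrt (a / b).
set S := X `&` closed_ball_ Num.norm (0 : vec) M.
have Sx0 : S x0.
  by split => //; rewrite /closed_ball_ /= sub0r normrN /M lerDl sqrtr_ge0.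
have S_compact : compact S.
  apply: bounded_closed_compact; last first.
    by apply: closedI => //; exact: closed_closed_ball_.
  exists M; split; first by rewrite num_real.
  move=> M' M_lt w [_]; rewrite /closed_ball_ /= sub0r normrN => w_le.
  by rewrite /= (le_trans w_le) // ltW.
have phi_contS : {within S, continuous phi}.
  by apply: continuous_in_subspaceT => x /set_mem [Xx _]; exact: phi_cont.
have [c /set_mem [Xc _] c_min] := EVT_min_rV (ex_intro _ x0 Sx0) S_compact phi_contS.
exists c; split => // w Xw.
have [w_le|w_gt] := leP `|w| M.
  apply: c_min; apply/mem_set; split => //.
  by rewrite /closed_ball_ /= sub0r normrN.
apply: (le_trans (c_min x0 (mem_set Sx0))).
have far : Num.sqrt (a / b) < Num.sqrt (sqnorm (w - x0)).
  apply: (lt_le_trans _ (mx_norm_le_sqrt_sqnorm _)).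
  have : `|w| <= `|x0| + `|w - x0| by rewrite -[X in `|X|](subrKC x0 w) ler_normD.
  by rewrite /M in w_gt; lra.
have w_far : 0 < sqnorm (w - x0).
  by rewrite -sqrtr_gt0; apply: le_lt_trans far; exact: sqrtr_ge0.
rewrite ltr_sqrt // in far.
have : a < b * sqnorm (w - x0) by rewrite -ltr_pdivrMl // mulrC.
by have := coercive w Xw; lra.
Qed.

Lemma proj_argmin (X : set vec) (y : vec) : closed X -> X !=set0 ->
  argmin_on X (fun z => enorm (z - y)) (Defs.proj X y).
Proof.
move=> X_closed [x0 Xx0]; rewrite /Defs.proj; apply: xgetPex.
have [z [Xz z_min]] : exists z, argmin_on X (fun w => sqnorm (w - y)) z.
  apply: (@coercive_argmin_exists _ _ x0 (2 * sqnorm (x0 - y)) 2^-1 X_closed Xx0).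
  - by move=> x _; exact: continuous_sqnormB.
  - by rewrite invr_gt0.
  - by rewrite mulr_ge0 // sqnorm_ge0.
  move=> w _ /=; have := sqnormD_le2 (w - y) (y - x0).
  by rewrite [_ + (y - x0)]addrA subrK (sqnormBC y); lra.
by exists z; split => // w Xw; rewrite /enorm ler_sqrt ?sqnorm_ge0 // z_min.
Qed.

Lemma proj_in (X : set vec) (y : vec) : closed X -> X !=set0 -> X (Defs.proj X y).
Proof. by move=> X_closed X_nonempty; have [] := proj_argmin y X_closed X_nonempty. Qed.

(* Moving from p = proj X y towards z in X cannot decrease the distance to y. *)
Lemma proj_variational (X : set vec) (y : vec) :
  closed X -> X !=set0 -> convex_set_of X ->
  forall z, X z -> 0 <= dotp (Defs.proj X y - y) (z - Defs.proj X y).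
Proof.
move=> X_closed X_nonempty X_convex z Xz.
have [Xp p_min] := proj_argmin y X_closed X_nonempty.
set p := Defs.proj X y in Xp p_min *.
apply: (@ge0_of_perturb _ _ (sqnorm (z - p) / 2) _ ltr01) => l l_gt0 l_lt1.
have : enorm (p - y) <= enorm (l *: z + (1 - l) *: p - y).
  by apply: p_min; apply: X_convex => //; apply/andP; split; lra.
have -> : l *: z + (1 - l) *: p - y = (p - y) + l *: (z - p).
  by apply/rowP => i; rewrite !mxE; ring.
rewrite /enorm ler_sqrt ?sqnorm_ge0 // [X in _ <= X]sqnormD dotpZr sqnormZ => h.
have : 0 <= (2 * l) * (dotp (p - y) (z - p) + l * (sqnorm (z - p) / 2)) by lra.
by rewrite pmulr_rge0 // mulr_gt0.
Qed.

Lemma interior_argmin_grad_eq0 (X : set vec) (phi : vec -> R) (z : vec) (L : R) :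
  interior X z -> argmin_on X phi z ->
  (forall w, X w -> phi w - phi z - dotp (grad phi z) (w - z) <= L / 2 * sqnorm (w - z)) ->
  forall v, dotp (grad phi z) v = 0.
Proof.
move=> z_int [_ z_min] smooth.
suff dir_ge0 : forall v, 0 <= dotp (grad phi z) v.
  by move=> v; apply/eqP; rewrite eq_le dir_ge0 andbT -oppr_ge0 -dotpNr dir_ge0.
move=> v; move/nbhs_ballP: z_int => [e /= e_gt0 z_ball].
have v1_gt0 : 0 < `|v| + 1 by rewrite ltr_wpDl.
apply: (@ge0_of_perturb _ _ (L / 2 * sqnorm v) _ (divr_gt0 e_gt0 v1_gt0)).
move=> s s_gt0 s_lt.
have Xw : X (z + s *: v).
  apply: z_ball; rewrite -ball_normE /ball_ /= opprD addrA subrr sub0r normrN.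
  rewrite normrZ gtr0_norm //; rewrite ltr_pdivlMr // mulrDr mulr1 in s_lt.
  by apply: le_lt_trans s_lt; rewrite lerDl ltW.
have := z_min _ Xw; have := smooth _ Xw.
rewrite (addrC z) addrK dotpZr sqnormZ => h1 h2.
have : 0 <= s * (dotp (grad phi z) v + s * (L / 2 * sqnorm v)) by lra.
by rewrite pmulr_rge0.
Qed.

(* Combine the variational inequality of the projection, the upper bound on phi
   at the new point and the quadratic growth of phi around its minimizer z. *)
Lemma proj_grad_step_contract (X : set vec) (phi : vec -> R) (mu L : R) (z x : vec) :
  closed X -> X !=set0 -> convex_set_of X -> 0 < mu -> mu <= L ->
  (forall x y, X x -> X y ->
     mu / 2 * sqnorm (y - x) <= phi y - phi x - dotp (grad phi x) (y - x) /\
     phi y - phi x - dotp (grad phi x) (y - x) <= L / 2 * sqnorm (y - x)) ->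
  X z -> (forall w, X w -> phi z + mu / 2 * sqnorm (w - z) <= phi w) -> X x ->
  sqnorm (Defs.proj X (x - L^-1 *: grad phi x) - z) <= (L - mu) / (L + mu) * sqnorm (x - z).
Proof.
move=> X_closed X_nonempty X_convex mu_gt0 mu_le_L sandwich Xz z_min Xx.
have L_gt0 : 0 < L := lt_le_trans mu_gt0 mu_le_L.
set g := grad phi x; set p := Defs.proj X _.
have Xp : X p := proj_in _ X_closed X_nonempty.
have VI : 0 <= L * dotp (p - x) (z - p) + dotp g (z - p).
  have := proj_variational (x - L^-1 *: g) X_closed X_nonempty X_convex Xz.
  rewrite -/p (_ : p - (x - L^-1 *: g) = (p - x) + L^-1 *: g); last first.
    by apply/rowP => i; rewrite !mxE; ring.
  rewrite dotpDl dotpZl -(pmulr_rge0 _ L_gt0) mulrDr mulrA mulfV ?gt_eqF //.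
  by rewrite mul1r.
have [_ up_p] := sandwich x p Xx Xp.
have [low_z _] := sandwich x z Xx Xz.
have z_p := z_min p Xp.
have split_zx : z - x = (p - x) + (z - p) by rewrite [X in _ = X]addrC addrA subrK.
have gE : dotp g (z - x) = dotp g (p - x) + dotp g (z - p) by rewrite -dotpDr -split_zx.
have nE : sqnorm (z - x) = sqnorm (p - x) + 2 * dotp (p - x) (z - p) + sqnorm (p - z).
  by rewrite -(sqnormBC z p) -sqnormD -split_zx.
rewrite nE in low_z.
have key : (L + mu) * sqnorm (p - z) <= (L - mu) * sqnorm (x - z).
  by rewrite (sqnormBC x) nE; nra.
by rewrite mulrAC ler_pdivlMr ?addr_gt0 // mulrC.
Qed.

Lemma omgd_step_in (X : set vec) (f : nat -> vec -> R) (L : R) s k w :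
  closed X -> X !=set0 -> X w -> X (iter k (omgd_step X f L s) w).
Proof. by move=> X_closed X_nonempty Xw; case: k => [|k] //=; exact: proj_in. Qed.

Lemma iter_omgd_step_contract (X : set vec) (f : nat -> vec -> R) (mu L : R) s (z x : vec) k :
  closed X -> X !=set0 -> convex_set_of X -> 0 < mu -> mu <= L ->
  (forall x y, X x -> X y ->
     mu / 2 * sqnorm (y - x) <= f s y - f s x - dotp (grad (f s) x) (y - x) /\
     f s y - f s x - dotp (grad (f s) x) (y - x) <= L / 2 * sqnorm (y - x)) ->
  X z -> (forall w, X w -> f s z + mu / 2 * sqnorm (w - z) <= f s w) -> X x ->
  sqnorm (iter k (omgd_step X f L s) x - z) <= ((L - mu) / (L + mu)) ^+ k * sqnorm (x - z).
Proof.
move=> X_closed X_nonempty X_convex mu_gt0 mu_le_L sandwich Xz z_min Xx.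
have q_ge0 : 0 <= (L - mu) / (L + mu).
  by rewrite divr_ge0 ?subr_ge0 // ltW // addr_gt0 // (lt_le_trans mu_gt0).
elim: k => [|k IH]; first by rewrite expr0 mul1r.
rewrite iterS exprS -mulrA; apply: le_trans _ (ler_wpM2l q_ge0 IH).
by apply: proj_grad_step_contract => //; exact: omgd_step_in.
Qed.

End Minimizers.

Definition with_initial (R : realType) (d : nat) (x0 : 'rV[R]_d) (y : nat -> 'rV[R]_d) t :=
  if t is 0 then x0 else y t.

Lemma with_initialS (R : realType) (d : nat) (x0 : 'rV[R]_d) y t :
  with_initial x0 y t.+1 = y t.+1.
Proof. by []. Qed.

Lemma qs_costE (R : realType) (d : nat) (f : nat -> 'rV[R]_d -> R) T x0 y :
  qs_cost f T x0 y =
  \sum_(1 <= t < T.+1) (f t (y t) + 2^-1 * sqnorm (y t - with_initial x0 y t.-1)).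
Proof. by apply: eq_big_nat => -[|[|t]] _; rewrite enorm_sq. Qed.

Section OMGD.
Variables (R : realType) (d T : nat) (X : set 'rV[R]_d) (mu L : R).
Variables (f : nat -> 'rV[R]_d -> R) (K : nat).
Local Notation vec := 'rV[R]_d.
Hypotheses (X_closed : closed X) (X_convex : convex_set_of X) (X0 : X 0).
Hypotheses (mu_gt0 : 0 < mu) (mu_le_L : mu <= L).
Hypothesis f_ge0 : forall {t}, (1 <= t <= T)%N -> forall {x}, X x -> 0 <= f t x.
Hypothesis f_differentiable :
  forall {t}, (1 <= t <= T)%N -> forall {x}, X x -> differentiable (f t) x.
Hypothesis f_sandwich : forall {t}, (1 <= t <= T)%N -> forall {x y}, X x -> X y ->
  mu / 2 * sqnorm (y - x) <= f t y - f t x - dotp (grad (f t) x) (y - x) /\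
  f t y - f t x - dotp (grad (f t) x) (y - x) <= L / 2 * sqnorm (y - x).
Hypothesis argmin_interior : forall {t}, (1 <= t <= T)%N -> forall {z}, X z ->
  (forall x, X x -> f t z <= f t x) -> interior X z.
Hypothesis K_ceil : (K%:R : R) = (Num.ceil ((L + mu) / (2 * mu) * ln 4))%:~R.

Let X_nonempty : X !=set0. Proof. by exists 0. Qed.

Definition xstar t := if (1 <= t <= T)%N then xget 0 (argmin_on X (f t)) else 0.

Lemma xstar0 : xstar 0 = 0. Proof. by []. Qed.

(* f_t is coercive: f_t w >= f_t 0 + <grad f_t 0, w> + mu/2 |w|^2. *)
Lemma xstarP t : (1 <= t <= T)%N -> argmin_on X (f t) (xstar t).
Proof.
move=> ht; rewrite /xstar ht; apply: xgetPex.
apply: (@coercive_argmin_exists _ _ _ _ 0 (mu^-1 * sqnorm (grad (f t) 0)) (mu / 4)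
  X_closed X0).
- by move=> x Xx; exact: differentiable_continuous (f_differentiable ht Xx).
- by rewrite divr_gt0.
- by rewrite mulr_ge0 ?invr_ge0 ?sqnorm_ge0 // ltW.
move=> w Xw; have [low _] := f_sandwich ht X0 Xw.
by have := dotp_ge_young (grad (f t) 0) (w - 0) mu_gt0; lra.
Qed.

Lemma grad_xstar t v : (1 <= t <= T)%N -> dotp (grad (f t) (xstar t)) v = 0.
Proof.
move=> ht; have [Xz z_min] := xstarP ht.
apply: (@interior_argmin_grad_eq0 _ _ _ _ _ L (argmin_interior ht Xz z_min) (xstarP ht)).
by move=> w Xw; have [] := f_sandwich ht Xz Xw.
Qed.

Lemma xstar_lower_quadratic t w : (1 <= t <= T)%N -> X w ->
  f t (xstar t) + mu / 2 * sqnorm (w - xstar t) <= f t w.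
Proof.
move=> ht Xw; have [Xz _] := xstarP ht.
by have [low _] := f_sandwich ht Xz Xw; rewrite grad_xstar // in low; lra.
Qed.

Lemma xstar_upper_quadratic t w : (1 <= t <= T)%N -> X w ->
  f t w <= f t (xstar t) + L / 2 * sqnorm (w - xstar t).
Proof.
move=> ht Xw; have [Xz _] := xstarP ht.
by have [_ up] := f_sandwich ht Xz Xw; rewrite grad_xstar // in up; lra.
Qed.

Local Notation x := (omgd X f L K 0).

Lemma omgdSS t : x t.+2 = iter K (omgd_step X f L t.+1) (x t.+1).
Proof. by []. Qed.

Lemma omgd_in t : X (x t).
Proof. by elim: t => [|[|t] IH] //; rewrite omgdSS; apply: omgd_step_in. Qed.

Lemma with_initial_omgd t : with_initial 0 x t = x t.
Proof. by case: t. Qed.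

Definition track_err t := sqnorm (x t - xstar t).

Definition path_step t := sqnorm (xstar t - xstar t.-1).

Lemma track_err0 : track_err 0 = 0.
Proof. by rewrite /track_err xstar0 subr0; exact: sqnorm0. Qed.

Lemma omgd_tracking t : (1 <= t <= T)%N ->
  sqnorm (x t - xstar t.-1) <= 4^-1 * track_err t.-1.
Proof.
case: t => [|[|t]] ht //.
  by rewrite track_err0 xstar0 subr0 (_ : x 1 = 0) // sqnorm0 mulr0.
have ht' : (1 <= t.+1 <= T)%N by move: ht => /andP[_ /ltnW].
have [Xz _] := xstarP ht'.
rewrite omgdSS; apply: le_trans (iter_omgd_step_contract K X_closed X_nonempty
  X_convex mu_gt0 mu_le_L (@f_sandwich _ ht') Xz
  (fun w Xw => xstar_lower_quadratic ht' Xw) (omgd_in t.+1)) _.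
apply: ler_wpM2r; first exact: sqnorm_ge0.
exact: contraction_pow_le_quarter mu_gt0 mu_le_L K_ceil.
Qed.

Lemma track_err_rec t : (1 <= t <= T)%N ->
  track_err t <= 2^-1 * track_err t.-1 + 2 * path_step t.
Proof.
move=> ht; have := sqnormD_le2 (x t - xstar t.-1) (xstar t.-1 - xstar t).
rewrite addrA subrK (sqnormBC (xstar t.-1)) -/(track_err t) -/(path_step t).
by have := omgd_tracking ht; lra.
Qed.

Lemma omgd_switch_le t : (1 <= t <= T)%N ->
  sqnorm (x t - x t.-1) <= 9 / 4 * track_err t.-1.
Proof.
move=> ht; have := sqnormD_le (x t - xstar t.-1) (xstar t.-1 - x t.-1) (ltr0Sn R 1).
rewrite addrA subrK (sqnormBC (xstar t.-1)) -/(track_err t.-1).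
have := omgd_tracking ht; have := sqnorm_ge0 (x t.-1 - xstar t.-1).
by rewrite -/(track_err t.-1); lra.
Qed.

Lemma sum_track_err_le :
  \sum_(1 <= t < T.+1) track_err t <= 4 * \sum_(1 <= t < T.+1) path_step t.
Proof.
have := sum_shift_le T track_err0 (fun t => sqnorm_ge0 _).
have : \sum_(1 <= t < T.+1) track_err t <=
       2^-1 * \sum_(1 <= t < T.+1) track_err t.-1 + 2 * \sum_(1 <= t < T.+1) path_step t.
  rewrite !mulr_sumr -big_split; apply: ler_sum_nat => t; rewrite ltnS.
  exact: track_err_rec.
lra.
Qed.

Lemma C_OMGD_le : C_OMGD X f L K T 0 <=
  \sum_(1 <= t < T.+1) f t (xstar t) + (2 * L + 9 / 2) * \sum_(1 <= t < T.+1) path_step t.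
Proof.
have L_gt0 : 0 < L := lt_le_trans mu_gt0 mu_le_L.
have : C_OMGD X f L K T 0 <= \sum_(1 <= t < T.+1) f t (xstar t) +
    (L / 2 * \sum_(1 <= t < T.+1) track_err t + 9 / 8 * \sum_(1 <= t < T.+1) track_err t.-1).
  rewrite /C_OMGD qs_costE !mulr_sumr -!big_split; apply: ler_sum_nat => t.
  rewrite ltnS => ht /=; rewrite with_initial_omgd.
  have := xstar_upper_quadratic ht (omgd_in t); have := omgd_switch_le ht.
  by rewrite -/(track_err t); lra.
have := sum_shift_le T track_err0 (fun t => sqnorm_ge0 _).
have := sum_track_err_le; have := ler_wpM2l (ltW L_gt0) sum_track_err_le.
lra.
Qed.

Variable y : nat -> vec.
Hypothesis y_in : forall t, (1 <= t <= T)%N -> X (y t).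

Definition comp_err t := sqnorm (with_initial 0 y t - xstar t).

Definition comp_switch t := sqnorm (y t - with_initial 0 y t.-1).

Lemma comp_err0 : comp_err 0 = 0.
Proof. by rewrite /comp_err xstar0 subr0; exact: sqnorm0. Qed.

Lemma qs_cost_ge : \sum_(1 <= t < T.+1) f t (xstar t) +
    (mu / 2 * \sum_(1 <= t < T.+1) comp_err t + 2^-1 * \sum_(1 <= t < T.+1) comp_switch t)
  <= qs_cost f T 0 y.
Proof.
rewrite qs_costE !mulr_sumr -!big_split; apply: ler_sum_nat => t.
rewrite ltnS => ht /=; case: t ht => [//|t] ht; rewrite /comp_err /comp_switch with_initialS.
by have := xstar_lower_quadratic ht (y_in ht); lra.
Qed.

Lemma sum_path_step_le : \sum_(1 <= t < T.+1) path_step t <=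
  (4 + mu) * \sum_(1 <= t < T.+1) comp_err t + (1 + 4 / mu) * \sum_(1 <= t < T.+1) comp_switch t.
Proof.
have step t : path_step t.+1 <=
    (2 + mu / 2) * (comp_err t.+1 + comp_err t) + (1 + 4 / mu) * comp_switch t.+1.
  have c_gt0 : 0 < mu / 4 by rewrite divr_gt0.
  have := sqnorm_detour_le (xstar t) (xstar t.+1) (with_initial 0 y t) (y t.+1) c_gt0.
  change (path_step t.+1) with (sqnorm (xstar t.+1 - xstar t)).
  change (comp_switch t.+1) with (sqnorm (y t.+1 - with_initial 0 y t)).
  by rewrite /comp_err with_initialS invf_div; lra.
have c_ge0 : 0 <= 2 + mu / 2 by rewrite addr_ge0 // divr_ge0 // ltW.
have := ler_wpM2l c_ge0 (sum_shift_le T comp_err0 (fun t => sqnorm_ge0 _)).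
have : \sum_(1 <= t < T.+1) path_step t <= (2 + mu / 2) *
    (\sum_(1 <= t < T.+1) comp_err t + \sum_(1 <= t < T.+1) comp_err t.-1) +
    (1 + 4 / mu) * \sum_(1 <= t < T.+1) comp_switch t.
  rewrite -big_split !mulr_sumr -big_split.
  by apply: ler_sum_nat => -[//|t] _; exact: step.
lra.
Qed.

Lemma C_OMGD_le_qs_cost :
  C_OMGD X f L K T 0 <= (4 * (L + 5) + 16 * (L + 5) / mu) * qs_cost f T 0 y.
Proof.
have L_gt0 : 0 < L := lt_le_trans mu_gt0 mu_le_L.
have alg := C_OMGD_le; have path := sum_path_step_le; have opt := qs_cost_ge.
set Sm := \sum_(1 <= t < T.+1) f t (xstar t) in alg opt.
set SA := \sum_(1 <= t < T.+1) comp_err t in path opt.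
set SB := \sum_(1 <= t < T.+1) comp_switch t in path opt.
set SP := \sum_(1 <= t < T.+1) path_step t in alg path.
set B := 4 * (L + 5) + 16 * (L + 5) / mu.
have Sm_ge0 : 0 <= Sm.
  rewrite /Sm big_nat_cond; apply: sumr_ge0 => t; rewrite andbT ltnS => ht.
  by have [Xz _] := xstarP ht; exact (f_ge0 ht Xz).
have SA_ge0 : 0 <= SA by apply: sumr_ge0 => t _; exact: sqnorm_ge0.
have SB_ge0 : 0 <= SB by apply: sumr_ge0 => t _; exact: sqnorm_ge0.
have B_ge1 : 1 <= B.
  have : 0 <= 16 * (L + 5) / mu by rewrite divr_ge0 ?mulr_ge0 ?addr_ge0 // ltW.
  by rewrite /B; lra.
(* B leaves a slack of 11/2 (mu + 4) on SA and of 11/2 (1 + 4/mu) on SB. *)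
have slack : B * (Sm + (mu / 2 * SA + 2^-1 * SB)) -
    (Sm + (2 * L + 9 / 2) * ((4 + mu) * SA + (1 + 4 / mu) * SB)) =
    (B - 1) * Sm + 11 / 2 * (mu + 4) * SA + 11 / 2 * (1 + 4 / mu) * SB.
  by rewrite /B; field; rewrite gt_eqF.
have : 0 <= (B - 1) * Sm by rewrite mulr_ge0 // subr_ge0.
have : 0 <= 11 / 2 * (mu + 4) * SA by rewrite !mulr_ge0 // addr_ge0 // ltW.
have : 0 <= 11 / 2 * (1 + 4 / mu) * SB.
  by rewrite !mulr_ge0 // addr_ge0 // divr_ge0 // ltW.
have c_ge0 : 0 <= 2 * L + 9 / 2 by lra.
have B_ge0 : 0 <= B by lra.
have := ler_wpM2l c_ge0 path; have := ler_wpM2l B_ge0 opt.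
lra.
Qed.

End OMGD.

Theorem theorem1 (R : realType) (d T : nat) (X : set 'rV[R]_d) (mu L : R)
  (f : nat -> 'rV[R]_d -> R) (K : nat) :
  (1 <= d)%N -> (1 <= T)%N ->
  X !=set0 -> closed X -> convex_set_of X -> X 0 ->
  0 < mu -> mu <= L ->
  (forall t, (1 <= t <= T)%N -> forall x, X x -> 0 <= f t x) ->
  (forall t, (1 <= t <= T)%N -> forall x, X x -> differentiable (f t) x) ->
  (forall t, (1 <= t <= T)%N -> forall x y, X x -> X y ->
     mu / 2 * enorm (y - x) ^+ 2 <= f t y - f t x - dotp (grad (f t) x) (y - x)
     /\ f t y - f t x - dotp (grad (f t) x) (y - x) <= L / 2 * enorm (y - x) ^+ 2) ->
  (forall t, (1 <= t <= T)%N -> forall xs, X xs ->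
     (forall x, X x -> f t xs <= f t x) -> (interior X) xs) ->
  (K%:R : R) = (Num.ceil ((L + mu) / (2 * mu) * ln 4))%:~R ->
  C_OMGD X f L K T 0 <= (4 * (L + 5) + 16 * (L + 5) / mu) * C_OPT X f T 0.
Proof.
move=> _ _ _ X_closed X_convex X0 mu_gt0 mu_le_L f_ge0 f_diff f_sandwich argmin_int K_ceil.
have sandwich t : (1 <= t <= T)%N -> forall x y, X x -> X y ->
    mu / 2 * sqnorm (y - x) <= f t y - f t x - dotp (grad (f t) x) (y - x) /\
    f t y - f t x - dotp (grad (f t) x) (y - x) <= L / 2 * sqnorm (y - x).
  by move=> ht x y Xx Xy; rewrite -!enorm_sq; exact: f_sandwich.
have B_gt0 : 0 < 4 * (L + 5) + 16 * (L + 5) / mu.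
  have L_gt0 : 0 < L := lt_le_trans mu_gt0 mu_le_L.
  have : 0 <= 16 * (L + 5) / mu by rewrite divr_ge0 ?mulr_ge0 ?addr_ge0 // ltW.
  lra.
rewrite -ler_pdivrMl //; apply: lb_le_inf.
  by exists (qs_cost f T 0 (fun=> 0)), (fun=> 0).
move=> _ [y [y_in ->]]; rewrite ler_pdivrMl //.
exact: (C_OMGD_le_qs_cost X_closed X_convex X0 mu_gt0 mu_le_L f_ge0 f_diff sandwich
  argmin_int K_ceil y_in).
Qed.
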